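(* For every $\mu \in \mathcal{X}$ and every probability distribution $P_X$ on $\mathcal{X}$, $D(\mu ; P_X) \in [0, 2]$. Moreover, with $X_1, X_2 \sim P_X$ independent: (i) $D(\mu ; P_X) = 0$ if and only if $P_X(\{\mu\}) = 0$ and $P ( L[X_1, X_2, \mu] \cup L[X_2, X_1, \mu] ) = 1$; (ii) $D(\mu ; P_X) = 2$ if and only if $P_X(\{\mu\}) = 0$ and $P( L[X_1, \mu, X_2] ) = 1$.
   Context: $(\mathcal{X}, d)$ is a complete separable metric space with its Borel $\sigma$-algebra. Define $h: \mathcal{X}^3 \to \mathbb{R}$ by $h(x_1, x_2, x_3) := \mathbb{I}( x_3 \notin \{x_1, x_2\} ) \dfrac{ d^2(x_1, x_3) + d^2(x_2, x_3) - d^2(x_1, x_2) }{d(x_1, x_3)\, d(x_2, x_3) }$, where $h := 0$ when $x_3 \in \{x_1,x_2\}$. The metric spatial depth of $\mu \in \mathcal{X}$ with respect to a probability distribution $P_X$ on $\mathcal{X}$ is $D(\mu; P_X) := 1 - \frac{1}{2} \mathrm{E} \{ h(X_1, X_2, \mu) \}$, where $X_1, X_2 \sim P_X$ are independent. For $x_1,x_2,x_3\in\mathcal{X}$, $L[x_1, x_2, x_3]$ denotes the event (condition) that $d(x_1, x_3) = d(x_1, x_2) + d(x_2, x_3)$, i.e. the three points lie on a metric line with $x_2$ between $x_1$ and $x_3$. *)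

From HB Require Import structures.
From mathcomp Require Import all_boot all_order all_algebra.
From mathcomp Require Import all_classical all_reals all_analysis.
Set Implicit Arguments. Unset Strict Implicit. Unset Printing Implicit Defensive.
Import Order.TTheory GRing.Theory Num.Theory.
Local Open Scope classical_set_scope.
Local Open Scope ring_scope.

Section MetricDefs.
Context {R : realType} {T : Type} (dist : T -> T -> R).

Definition is_metric : Prop :=
  [/\ (forall x y, 0 <= dist x y),
      (forall x y, dist x y = 0 <-> x = y),
      (forall x y, dist x y = dist y x) &
      (forall x y z, dist x z <= dist x y + dist y z)].

Definition metric_open (A : set T) : Prop :=
  forall x, A x -> exists e : R, 0 < e /\ (forall y, dist x y < e -> A y).

Definition metric_complete : Prop :=
  forall u : nat -> T,
    (forall e : R, 0 < e -> exists N, forall m n, (N <= m)%N -> (N <= n)%N ->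
        dist (u m) (u n) < e) ->
    exists l, forall e : R, 0 < e -> exists N, forall n, (N <= n)%N -> dist (u n) l < e.

Definition metric_separable : Prop :=
  exists D : set T, countable D /\
    forall x (e : R), 0 < e -> exists y, D y /\ dist x y < e.

Definition Lmet (x1 x2 x3 : T) : Prop := dist x1 x3 = dist x1 x2 + dist x2 x3.

Definition hker (x1 x2 x3 : T) : R :=
  if `[< x3 = x1 \/ x3 = x2 >] then 0
  else (dist x1 x3 ^+ 2 + dist x2 x3 ^+ 2 - dist x1 x2 ^+ 2)
       / (dist x1 x3 * dist x2 x3).
End MetricDefs.

Definition metric_borel {R : realType} {d : measure_display} {T : measurableType d}
  (dist : T -> T -> R) : Prop :=
  forall A : set T, measurable A <-> <<s [set B | metric_open dist B] >> A.

Definition msdepth {R : realType} {d : measure_display} {T : measurableType d}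
  (dist : T -> T -> R) (P : probability T R) (mu : T) : \bar R :=
  (1%:E - (2^-1)%:E * \int[(P \x P)%E]_z (hker dist z.1 z.2 mu)%:E)%E.

From HB Require Import structures.
From mathcomp Require Import all_boot all_order all_algebra.
From mathcomp Require Import all_classical all_reals all_analysis.
From mathcomp Require Import ring lra measurable_realfun.
Import Order.TTheory GRing.Theory Num.Theory.
Local Open Scope classical_set_scope.
Local Open Scope ring_scope.

(* Write h(z) := hker dist z.1 z.2 mu for a pair z = (X1, X2).  By the triangle
   inequality the cosine expression (a^2 + b^2 - c^2) / (a b) built from the
   side lengths of the triangle (X1, X2, mu) lies in [-2, 2], with value 2
   exactly on metric lines with mu at an end and -2 exactly on metric lines with
   mu in the middle (lemmas [triangle_cosine], [hker_profile]).  Since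
   D = 1 - E h / 2, we get D = E (2 - h) / 2 and 2 - D = E (h + 2) / 2 with
   nonnegative integrands, whence D lies in [0, 2]; moreover D = 0 (resp. 2)
   iff h = 2 (resp. -2) almost surely ([integral_eq0_as]).  Finally, for the
   i.i.d. pair an event of the form "S and X1, X2 <> mu" is almost sure iff mu is
   not an atom and S is almost sure ([prod_avoid_as]).  Separability enters only
   to make the distance, hence h and the line events, jointly measurable
   ([measurable_dist]). *)
Section metric_facts.
Context {R : realType} {T : Type} {dist : T -> T -> R}.
Hypothesis Hmetric : is_metric dist.

Lemma dist_ge0 x y : 0 <= dist x y. Proof. by case: Hmetric. Qed.
Lemma dist_eq0 x y : dist x y = 0 <-> x = y. Proof. by case: Hmetric. Qed.
Lemma distC x y : dist x y = dist y x. Proof. by case: Hmetric. Qed.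
Lemma dist_triangle x y z : dist x z <= dist x y + dist y z.
Proof. by case: Hmetric. Qed.

Lemma dist_gt0 x y : x <> y -> 0 < dist x y.
Proof. by move=> xy; rewrite lt_def dist_ge0 andbT; apply/eqP => /dist_eq0. Qed.

End metric_facts.

Lemma triangle_cosine {F : realFieldType} {a b c : F} :
  0 < a -> 0 < b -> 0 <= c ->
  a <= c + b -> b <= c + a -> c <= a + b ->
  let k := (a ^+ 2 + b ^+ 2 - c ^+ 2) / (a * b) in
  [/\ -2 <= k <= 2, (k = 2 <-> a = c + b \/ b = c + a) & (k = -2 <-> c = a + b)].
Proof.
move=> a0 b0 c0 tab tba tc k.
have ab0 : 0 < a * b by rewrite mulr_gt0.
have kE : k * (a * b) = a ^+ 2 + b ^+ 2 - c ^+ 2 by rewrite divfK // gt_eqF.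
have eq_scaled (v : F) : k = v <-> k * (a * b) = v * (a * b).
  by split => [->//|/(mulIf (lt0r_neq0 ab0))].
have upper : 2 * (a * b) - k * (a * b) = (c - a + b) * (c + a - b).
  by rewrite kE; ring.
have lower : k * (a * b) + 2 * (a * b) = (a + b - c) * (a + b + c).
  by rewrite kE; ring.
split.
- rewrite -(ler_pM2r ab0) -[X in _ && X](ler_pM2r ab0); apply/andP; split; nra.
- rewrite eq_scaled; split => [k2|[e|e]]; last 2 first; [nra|nra|].
  have : (c - a + b) * (c + a - b) = 0 by rewrite -upper k2 subrr.
  by move/eqP; rewrite mulf_eq0 => /orP[/eqP|/eqP] ?; [left|right]; lra.
- rewrite eq_scaled; split => [k2|e]; last by nra.
  have : (a + b - c) * (a + b + c) = 0 by rewrite -lower k2; ring.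
  by move/eqP; rewrite mulf_eq0 => /orP[/eqP|/eqP] ?; lra.
Qed.

Section kernel.
Context {R : realType} {T : Type} {dist : T -> T -> R}.
Hypothesis Hmetric : is_metric dist.

(* The kernel is the cosine expression with the convention x / 0 = 0, which
   makes the degenerate case x3 \in {x1, x2} automatic. *)
Lemma hkerE x1 x2 x3 : hker dist x1 x2 x3 =
  (dist x1 x3 ^+ 2 + dist x2 x3 ^+ 2 - dist x1 x2 ^+ 2) / (dist x1 x3 * dist x2 x3).
Proof.
rewrite /hker; case: asboolP => [[->|->]|//];
  by rewrite (proj2 (dist_eq0 Hmetric _ _) erefl) ?mul0r ?mulr0 invr0 mulr0.
Qed.

Lemma hker_profile x1 x2 x3 : [/\ -2 <= hker dist x1 x2 x3 <= 2,
  hker dist x1 x2 x3 = 2 <->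
    (x1 <> x3 /\ x2 <> x3) /\ (Lmet dist x1 x2 x3 \/ Lmet dist x2 x1 x3) &
  hker dist x1 x2 x3 = -2 <-> (x1 <> x3 /\ x2 <> x3) /\ Lmet dist x1 x3 x2].
Proof.
rewrite /hker; case: asboolP => [deg|/not_orP[/nesym n1 /nesym n2]].
  have nondeg : ~ (x1 <> x3 /\ x2 <> x3) by case: deg => -> [].
  split; first by apply/andP; split; lra.
  - by split => [/eqP|[/nondeg]//]; rewrite eq_sym pnatr_eq0.
  - by split => [/eqP|[/nondeg]//]; rewrite eq_sym oppr_eq0 pnatr_eq0.
have a0 := dist_gt0 Hmetric _ _ n1.
have b0 := dist_gt0 Hmetric _ _ n2.
have := dist_triangle Hmetric x1 x2 x3; have := dist_triangle Hmetric x2 x1 x3.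
have := dist_triangle Hmetric x1 x3 x2; rewrite /Lmet !(distC Hmetric x2 x1)
  !(distC Hmetric x3 x2) => t3 t2 t1.
have [k_range k2 kN2] := triangle_cosine a0 b0 (dist_ge0 Hmetric _ _) t1 t2 t3.
by split => //; [rewrite k2|rewrite kN2]; tauto.
Qed.

End kernel.

(* The inversion x |-> x^-1 (with 0^-1 = 0) is Borel measurable: it is continuous
   on the open set {x != 0} and constant on {0}. *)
Lemma measurable_inv {R : realType} : measurable_fun [set: R] (@GRing.inv R).
Proof.
have nz0 : measurable [set x : R | x != 0].
  by rewrite (_ : [set x | x != 0] = ~` [set 0]);
    [exact: measurableC (measurable_set1 0)|apply/seteqP; split => x /= /eqP].
have -> : [set: R] = [set x | x != 0] `|` [set 0].
  by apply/seteqP; split => x // _; case: (eqVneq x 0) => [->|x0]; [right|left].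
apply/(measurable_funU _ nz0 (measurable_set1 0)); split;
  last exact: measurable_fun_set1.
apply: open_continuous_measurable_fun; first exact: open_neq.
by move=> x /set_mem /= x0; exact: inv_continuous.
Qed.

Lemma measurable_eqr {d} {X : measurableType d} {R : realType} (f g : X -> R) :
  measurable_fun [set: X] f -> measurable_fun [set: X] g ->
  measurable [set x | f x = g x].
Proof.
move=> mf mg; have := measurable_fun_eqr mf mg measurableT (Y := [set true]) I.
rewrite setTI; congr measurable; apply/seteqP; split => x /=; first by move/eqP.
by move=> ->; rewrite eqxx.
Qed.

Section metric_measurability.
Context {R : realType} {d : measure_display} {T : measurableType d}
  {dist : T -> T -> R}.
Hypotheses (Hmetric : is_metric dist) (Hsep : metric_separable dist)
  (Hborel : metric_borel dist).

Lemma metric_open_measurable (A : set T) : metric_open dist A -> measurable A.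
Proof. by move=> oA; apply/Hborel; apply: sub_sigma_algebra. Qed.

Lemma measurable_ball (x : T) (r : R) : measurable [set y | dist x y < r].
Proof.
apply: metric_open_measurable => y /= xy; exists (r - dist x y).
split => [|z yz]; first by rewrite subr_gt0.
have := dist_triangle Hmetric x y z; lra.
Qed.

Lemma measurable_point (x : T) : measurable [set x].
Proof.
rewrite -[X in measurable X]setCK; apply/measurableC/metric_open_measurable.
move=> y /= yx; exists (dist y x); split; first exact: dist_gt0.
by move=> z yz zx; rewrite zx ltxx in yz.
Qed.

(* Given a dense set D, dist x y < r is witnessed by a point q of D and a radius
   1/(n+1): (x, y) lies in the product of the balls of radii 1/(n+1) and
   r - 1/(n+1) around q, a family indexed by D * nat. *)
Lemma dist_lt_dense (D : set T) :
  (forall x (e : R), 0 < e -> exists y, D y /\ dist x y < e) ->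
  forall x y r, dist x y < r <-> exists q, D q /\ exists n : nat,
    dist q x < n.+1%:R^-1 /\ dist q y < r - n.+1%:R^-1.
Proof.
move=> dD x y r; split => [xy|[q [_ [n [qx qy]]]]]; last first.
  have := dist_triangle Hmetric x q y; rewrite (distC Hmetric x q).
  by move: (n.+1%:R^-1) qx qy => t; lra.
have e0 : 0 < (r - dist x y) / 2 by rewrite divr_gt0 // subr_gt0.
pose n := Num.truncn ((r - dist x y) / 2)^-1.
have n_small : n.+1%:R^-1 < (r - dist x y) / 2.
  by rewrite -[X in _ < X]invrK ltf_pV2 ?posrE ?invr_gt0 // truncnS_gt.
have [q [Dq xq]] := dD x (n.+1%:R^-1) ltac:(by rewrite invr_gt0).
exists q; split => //; exists n; rewrite (distC Hmetric q x); split => //.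
have := dist_triangle Hmetric q x y; rewrite (distC Hmetric q x).
by move: (n.+1%:R^-1) n_small xq => t; lra.
Qed.

(* The distance is jointly measurable on T * T; this is where separability
   is needed, so that {dist < r} is a countable union of measurable rectangles. *)
Lemma measurable_dist : measurable_fun [set: T * T] (fun z => dist z.1 z.2).
Proof.
apply: (measurability _ (RGenInftyO.measurableE R)) => //.
move=> _ [_ [r ->] <-]; rewrite setTI.
have [D [cD dD]] := Hsep.
suff -> : (fun z : T * T => dist z.1 z.2) @^-1` `]-oo, r[ =
    \bigcup_(q in D) \bigcup_n
      ([set x | dist q x < n.+1%:R^-1] `*` [set y | dist q y < r - n.+1%:R^-1]).
  rewrite bigcup_set_type; apply: countable_bigcupT_measurable.
    by rewrite (eq_countable (card_setT _)).
  by move=> q; apply: bigcupT_measurable => n; apply: measurableX; exact: measurable_ball.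
apply/seteqP; split => -[x y]; rewrite /= in_itv /= (dist_lt_dense _ dD).
  by move=> [q [Dq [n qxy]]]; exists q => //; exists n.
by move=> [q Dq [n _ qxy]]; exists q; split => //; exists n.
Qed.

Section measurable_maps.
Context {d' : measure_display} {X : measurableType d'}.

Lemma measurable_dist_comp {u v : X -> T} :
  measurable_fun [set: X] u -> measurable_fun [set: X] v ->
  measurable_fun [set: X] (fun x => dist (u x) (v x)).
Proof.
by move=> m_u m_v; exact: (measurableT_comp measurable_dist (measurable_fun_pair m_u m_v)).
Qed.

Context {u v w : X -> T}.
Hypotheses (m_u : measurable_fun [set: X] u) (m_v : measurable_fun [set: X] v)
  (m_w : measurable_fun [set: X] w).

Lemma measurable_Lmet : measurable [set x | Lmet dist (u x) (v x) (w x)].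
Proof.
by apply: measurable_eqr; [|apply: measurable_funD]; exact: measurable_dist_comp.
Qed.

Lemma measurable_hker :
  measurable_fun [set: X] (fun x => hker dist (u x) (v x) (w x)).
Proof.
rewrite (_ : (fun x => _) = fun x =>
    (dist (u x) (w x) ^+ 2 + dist (v x) (w x) ^+ 2 - dist (u x) (v x) ^+ 2) *
    (dist (u x) (w x) * dist (v x) (w x))^-1); last first.
  by apply/funext => x; rewrite (hkerE Hmetric).
apply: measurable_funM.
  by apply: measurable_funB; [apply: measurable_funD|];
    apply: measurable_funX; exact: measurable_dist_comp.
by apply: (measurableT_comp measurable_inv); apply: measurable_funM;
  exact: measurable_dist_comp.
Qed.

End measurable_maps.
End metric_measurability.

Section probability_facts.
Local Open Scope ereal_scope.
Context {d : measure_display} {T : measurableType d} {R : realType}.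
Variable Q : probability T R.

Lemma probability_setC_eq0 (A : set T) : measurable A ->
  Q (~` A) = 0 <-> Q A = 1.
Proof.
move=> mA; rewrite probability_setC //.
have QAfin : Q A \is a fin_num by rewrite fin_num_measure.
split => [/eqP|->]; last by rewrite subee.
by rewrite sube_eq ?fin_num_adde_defr // add0e => /eqP <-.
Qed.

Lemma measureU_eq0 (A B : set T) : measurable A -> measurable B ->
  Q (A `|` B) = 0 <-> Q A = 0 /\ Q B = 0.
Proof.
move=> mA mB; split => [AB0|[A0 B0]]; last by rewrite measureU0 // A0.
have mAB : measurable (A `|` B) by exact: measurableU.
by split;
  [apply: (subset_measure0 mA mAB _ AB0)|apply: (subset_measure0 mB mAB _ AB0)].
Qed.

Lemma integral_eq0_as (g : T -> R) : measurable_fun [set: T] g ->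
  (forall x, (0 <= g x)%R) ->
  \int[Q]_x (g x)%:E = 0 <-> Q [set x | g x = 0%R] = 1.
Proof.
move=> mg g0; have mZ : measurable [set x | g x = 0%R].
  by apply: measurable_eqr => //; exact: measurable_cst.
rewrite -(probability_setC_eq0 _ mZ) -(negligibleP _ (measurableC mZ)).
rewrite (eq_integral (fun x => `|(EFin \o g) x|)); last first.
  by move=> x _; rewrite /= ger0_norm.
rewrite ae_eq_integral_abs //; last exact/measurable_EFinP.
split; apply: negligibleS => x /= nx gx; apply: nx; last by rewrite gx.
by case: (gx I).
Qed.

End probability_facts.

Section product_facts.
Local Open Scope ereal_scope.
Context {d : measure_display} {T : measurableType d} {R : realType}.
Variables (P : probability T R) (Q : probability (T * T)%type R) (mu : T).
Hypothesis Q_rect : forall A B, measurable A -> measurable B ->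
  Q (A `*` B) = P A * P B.
Hypothesis mmu : measurable [set mu].

Lemma prod_avoid_as (S : set (T * T)%type) : measurable S ->
  Q [set z | (z.1 <> mu /\ z.2 <> mu) /\ S z] = 1 <->
  P [set mu] = 0 /\ Q S = 1.
Proof.
move=> mS; pose hit := [set mu] `*` [set: T] `|` [set: T] `*` [set mu].
have mhit : measurable hit by apply: measurableU; exact: measurableX.
have -> : [set z | (z.1 <> mu /\ z.2 <> mu) /\ S z] = ~` (hit `|` ~` S).
  apply/seteqP; split => [z [[n1 n2] Sz] [[[/= e _]|[_ /= e]]|//]//|z nz].
  split; last by apply: contrapT => Sz; apply: nz; right.
  by split => e; apply: nz; left; [left|right].
have mbad : measurable (hit `|` ~` S) by apply: measurableU => //; exact: measurableC.
rewrite -(probability_setC_eq0 _ _ (measurableC mbad)) setCK.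
rewrite measureU_eq0 //; last exact: measurableC.
rewrite measureU_eq0 //; try exact: measurableX.
rewrite !Q_rect // probability_setT mule1 mul1e probability_setC_eq0 //; tauto.
Qed.

End product_facts.

Section depth.
Local Open Scope ereal_scope.
Context {R : realType} {d : measure_display} {T : measurableType d}
  {dist : T -> T -> R}.
Hypotheses (Hmetric : is_metric dist) (Hsep : metric_separable dist)
  (Hborel : metric_borel dist).
Variables (P : probability T R) (mu : T).

Let h (z : T * T) : R := hker dist z.1 z.2 mu.

Let h_range z : (-2 <= h z <= 2)%R.
Proof. by have [] := hker_profile Hmetric z.1 z.2 mu. Qed.

Let mh : measurable_fun [set: T * T] h.
Proof.
exact: (measurable_hker Hmetric Hsep Hborel measurable_fst measurable_snd
  (measurable_cst mu)).
Qed.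

Let bounded_integrable (f : T * T -> R) : measurable_fun [set: T * T] f ->
  (forall z, `|f z| <= 2)%R -> (P \x P).-integrable [set: T * T] (EFin \o f).
Proof.
move=> mf f2; apply: measurable_bounded_integrable => //.
  by apply: (le_lt_trans (probability_le1 _ measurableT)); rewrite ltry.
by exists 2%R; split => // M M2 z _; exact: le_trans (f2 z) (ltW M2).
Qed.

Let h_int : (P \x P).-integrable [set: T * T] (EFin \o h).
Proof.
apply: bounded_integrable => // z; have /andP[h1 h2] := h_range z.
by rewrite ler_norml h1 h2.
Qed.

Let two_int : (P \x P).-integrable [set: T * T] (EFin \o fun=> 2%R).
Proof.
by apply: bounded_integrable => [|z]; [exact: measurable_cst|rewrite ger0_norm].
Qed.

Let hmean : R := fine (\int[P \x P]_z (h z)%:E).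

Let hmeanE : \int[P \x P]_z (h z)%:E = hmean%:E.
Proof. by rewrite fineK //; exact: (integrable_fin_num measurableT h_int). Qed.

Let int_two : \int[P \x P]_z (2%R)%:E = 2%:E.
Proof.
by rewrite integral_cst // -[RHS]mule1; congr (_ * _); exact: probability_setT.
Qed.

Let msdepthE : msdepth dist P mu = (1 - 2^-1 * hmean)%:E.
Proof. by rewrite /msdepth -/h hmeanE -EFinM -EFinB. Qed.

Let int_two_sub_h : \int[P \x P]_z (2 - h z)%:E = (2 - hmean)%:E.
Proof.
under eq_integral do rewrite EFinB.
by rewrite (integralB_EFin measurableT two_int h_int) int_two hmeanE.
Qed.

Let int_h_add_two : \int[P \x P]_z (h z + 2)%:E = (hmean + 2)%:E.
Proof.
under eq_integral do rewrite EFinD.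
by rewrite (integralD_EFin measurableT h_int two_int) int_two hmeanE.
Qed.

Let hmean_range : (-2 <= hmean <= 2)%R.
Proof.
have lower : (0 <= hmean + 2)%R.
  rewrite -lee_fin -int_h_add_two; apply: integral_ge0 => z _.
  by have /andP[? ?] := h_range z; rewrite lee_fin; lra.
have upper : (0 <= 2 - hmean)%R.
  rewrite -lee_fin -int_two_sub_h; apply: integral_ge0 => z _.
  by have /andP[? ?] := h_range z; rewrite lee_fin; lra.
by apply/andP; split; lra.
Qed.

Lemma msdepth_range : 0 <= msdepth dist P mu <= 2%:E.
Proof.
rewrite msdepthE !lee_fin; have /andP[? ?] := hmean_range.
by apply/andP; split; lra.
Qed.

Lemma msdepth_eq0_as : msdepth dist P mu = 0 <->
  (P \x P) [set z | (z.1 <> mu /\ z.2 <> mu) /\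
                    (Lmet dist z.1 z.2 mu \/ Lmet dist z.2 z.1 mu)] = 1.
Proof.
have -> : msdepth dist P mu = 0 <-> \int[P \x P]_z (2 - h z)%:E = 0.
  by rewrite msdepthE int_two_sub_h; split => -[e]; congr EFin; lra.
have m2h : measurable_fun [set: T * T] (fun z => 2 - h z)%R.
  exact: measurable_funB.
have p2h z : (0 <= 2 - h z)%R by have /andP[_ ?] := h_range z; rewrite subr_ge0.
rewrite (integral_eq0_as _ _ m2h p2h).
suff -> : [set z | (2 - h z)%R = 0%R] = [set z | (z.1 <> mu /\ z.2 <> mu) /\
                    (Lmet dist z.1 z.2 mu \/ Lmet dist z.2 z.1 mu)] by [].
apply/seteqP; split => z /=; have [_ h2 _] := hker_profile Hmetric z.1 z.2 mu.
  by rewrite /h => e; apply/h2; lra.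
by move/h2; rewrite /h => ->; rewrite subrr.
Qed.

Lemma msdepth_eq2_as : msdepth dist P mu = 2%:E <->
  (P \x P) [set z | (z.1 <> mu /\ z.2 <> mu) /\ Lmet dist z.1 mu z.2] = 1.
Proof.
have -> : msdepth dist P mu = 2%:E <-> \int[P \x P]_z (h z + 2)%:E = 0.
  by rewrite msdepthE int_h_add_two; split => -[e]; congr EFin; lra.
have mh2 : measurable_fun [set: T * T] (fun z => h z + 2)%R.
  exact: measurable_funD.
have ph2 z : (0 <= h z + 2)%R by have /andP[? _] := h_range z; rewrite -lerBlDr sub0r.
rewrite (integral_eq0_as _ _ mh2 ph2).
suff -> : [set z | (h z + 2)%R = 0%R] =
    [set z | (z.1 <> mu /\ z.2 <> mu) /\ Lmet dist z.1 mu z.2] by [].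
apply/seteqP; split => z /=; have [_ _ hN2] := hker_profile Hmetric z.1 z.2 mu.
  by rewrite /h => e; apply/hN2; lra.
by move/hN2; rewrite /h => ->; rewrite addNr.
Qed.

End depth.

Theorem theorem3 (R : realType) (d : measure_display) (T : measurableType d)
  (dist : T -> T -> R)
  (Hmetric : is_metric dist) (Hcomplete : metric_complete dist)
  (Hsep : metric_separable dist) (Hborel : metric_borel dist)
  (P : probability T R) (mu : T) :
  [/\ (0 <= msdepth dist P mu <= 2%:E)%E,
      (msdepth dist P mu = 0%E <->
         P [set mu] = 0%E /\
         (P \x P)%E [set z | Lmet dist z.1 z.2 mu \/ Lmet dist z.2 z.1 mu] = 1%E) &
      (msdepth dist P mu = 2%:E <->
         P [set mu] = 0%E /\
         (P \x P)%E [set z | Lmet dist z.1 mu z.2] = 1%E)].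
Proof.
have prod_rect A B : measurable A -> measurable B ->
    (P \x P)%E (A `*` B) = (P A * P B)%E by exact: product_measure1E.
have mmu := measurable_point Hmetric Hborel mu.
have mLmet := measurable_Lmet Hmetric Hsep Hborel.
split; first exact: msdepth_range.
- rewrite (msdepth_eq0_as Hmetric Hsep Hborel); apply: prod_avoid_as => //.
  by apply: measurableU; apply: mLmet => //; exact: measurable_cst.
- rewrite (msdepth_eq2_as Hmetric Hsep Hborel); apply: prod_avoid_as => //.
  by apply: mLmet => //; exact: measurable_cst.
Qed.
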